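(* Let $K$ be a field and let $G_1, G_2$ be finite simple graphs. If the cut ideals of $G_1$ and $G_2$ admit squarefree Gröbner bases, then so does the cut ideal of their disjoint union $G_1 \sqcup G_2$.
   Context: For a finite simple graph $G$ with vertex set $V(G)$ and edge set $E(G)$, an unordered partition $A|B$ of $V(G)$ (into two sets, one of which may be empty) defines the cut $Cut(A|B)$, the set of edges with one endpoint in $A$ and the other in $B$. The cut ideal $I_G$ is the kernel of the $K$-algebra homomorphism $\phi_G: K[q_{A|B} : A|B \text{ unordered partition of } V(G)] \to K[s_{ij}, t_{ij} : \{i,j\} \in E(G)]$, $q_{A|B} \mapsto \prod_{\{i,j\}\in Cut(A|B)} s_{ij} \prod_{\{i,j\}\in E(G)\setminus Cut(A|B)} t_{ij}$. An ideal admits a squarefree Gröbner basis if, for some monomial order, it has a Gröbner basis consisting of binomials each of which is a difference of two squarefree monomials. *)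

From HB Require Import structures.
From mathcomp Require Import all_boot all_order all_algebra.
From mathcomp Require Import mpoly.
Set Implicit Arguments.
Unset Strict Implicit.
Unset Printing Implicit Defensive.
Import Order.TTheory GRing.Theory.
Local Open Scope ring_scope.

Definition simple_graph (V : finType) (e : rel V) : Prop :=
  ssrbool.symmetric e /\ irreflexive e.

Definition is_edge (V : finType) (e : rel V) : pred {set V} :=
  fun E => [exists i, exists j, e i j && (E == [set i; j])].
Definition edge (V : finType) (e : rel V) := {E : {set V} | is_edge e E}.

(* Unordered partitions A|B of V (B = complement of A; one block may be
   empty), represented as the set of blocks {A, V \ A}. *)
Definition is_upart (V : finType) : pred {set {set V}} :=
  fun P => [exists A : {set V}, P == [set A; ~: A]].
Definition upart (V : finType) := {P : {set {set V}} | is_upart P}.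

Definition in_cut (V : finType) (e : rel V) (P : upart V) (E : edge e) : bool :=
  [exists i in val E, exists j in val E, exists A in val P,
     (i \in A) && (j \notin A)].

Definition disj_union (V1 V2 : finType) (e1 : rel V1) (e2 : rel V2)
  : rel (V1 + V2)%type :=
  fun x y => match x, y with
             | inl a, inl b => e1 a b
             | inr a, inr b => e2 a b
             | _, _ => false
             end.

(* Number of variables q_{A|B}; the variable 'X_i corresponds to the
   unordered partition enum_val i. *)
Definition nq (V : finType) : nat := #|{: upart V}|.
(* Number of edges; the target ring K[s_E, t_E : E edge] is
   {mpoly K[ne + ne]}, s_E = 'X_(lshift (enum_rank E)),
   t_E = 'X_(rshift (enum_rank E)). *)
Definition ne (V : finType) (e : rel V) : nat := #|{: edge e}|.

Definition s_var (K : fieldType) (V : finType) (e : rel V) (E : edge e)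
  : {mpoly K[ne e + ne e]} := 'X_(lshift (ne e) (enum_rank E)).
Definition t_var (K : fieldType) (V : finType) (e : rel V) (E : edge e)
  : {mpoly K[ne e + ne e]} := 'X_(rshift (ne e) (enum_rank E)).

Definition phi_var (K : fieldType) (V : finType) (e : rel V) (i : 'I_(nq V))
  : {mpoly K[ne e + ne e]} :=
  \prod_(E : edge e)
     (if in_cut (enum_val i) E then s_var K E else t_var K E).

Definition phi (K : fieldType) (V : finType) (e : rel V)
  (p : {mpoly K[nq V]}) : {mpoly K[ne e + ne e]} :=
  mmap (fun c : K => c%:MP) (@phi_var K V e) p.

Definition cut_ideal (K : fieldType) (V : finType) (e : rel V)
  : pred {mpoly K[nq V]} :=
  fun p => phi e p == 0.

Definition monomial_order (n : nat) (le : rel 'X_{1..n}) : Prop :=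
  [/\ reflexive le, antisymmetric le, transitive le, total le &
      ((forall m, le 0%MM m) /\
       (forall m1 m2 m, le m1 m2 -> le (m1 + m)%MM (m2 + m)%MM))].

Definition is_lead (K : fieldType) (n : nat) (le : rel 'X_{1..n})
  (p : {mpoly K[n]}) (m : 'X_{1..n}) : Prop :=
  m \in msupp p /\ (forall m', m' \in msupp p -> le m' m).

(* gb is a Groebner basis of I w.r.t. le: gb is contained in I and the
   initial ideal in_le(I) is generated by the leading monomials of the
   elements of gb, i.e. every leading monomial of a nonzero element of I is
   divisible by the leading monomial of some element of gb. *)
Definition groebner_basis (K : fieldType) (n : nat) (le : rel 'X_{1..n})
  (I : pred {mpoly K[n]}) (gb : seq {mpoly K[n]}) : Prop :=
  (forall g, g \in gb -> g \in I) /\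
  (forall f mf, f \in I -> is_lead le f mf ->
     exists g, exists mg, [/\ g \in gb, is_lead le g mg & (mg <= mf)%MM]).

Definition sqfree_mnm (n : nat) (m : 'X_{1..n}) : bool :=
  [forall i, m i <= 1]%N.

Definition sqfree_binomial (K : fieldType) (n : nat) (g : {mpoly K[n]}) : Prop :=
  exists m1 m2 : 'X_{1..n},
    [/\ sqfree_mnm m1, sqfree_mnm m2 & g = 'X_[m1] - 'X_[m2]].

Definition has_sqfree_gb (K : fieldType) (n : nat) (I : pred {mpoly K[n]})
  : Prop :=
  exists le : rel 'X_{1..n}, exists gb : seq {mpoly K[n]},
    [/\ monomial_order le, groebner_basis le I gb
      & forall g, g \in gb -> sqfree_binomial g].

Arguments cut_ideal K {V} e.
Arguments phi K {V} e p.

(* The cut ideal of G is the toric ideal of the monomial map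
   q_P |-> prod_E (s_E or t_E), and a toric ideal has a squarefree Groebner
   basis for an order iff every monomial of a fibre of the exponent map other
   than the least one is divisible by the leading monomial of a squarefree
   binomial X^a - X^b with a, b in a common fibre.
   A cut of G1 + G2 restricts to cuts of G1 and of G2, and each pair of cuts
   glues back in exactly two ways, so the degree-refined fibres of G1 + G2 are
   pairs of fibres of G1 and G2: a toric fibre product.  Order monomials first
   by their G1-margin, then by their G2-margin, then by the number of
   non-canonical variables, then by a crossing weight.  Linear binomials
   remove non-canonical variables, quadratic ones remove crossings, moves of
   G1 or G2 lift to the product, and a canonical non-crossing monomial is
   determined by its margins, hence is the least monomial of its fibre. *)

From HB Require Import structures.
From mathcomp Require Import all_boot all_order all_algebra.
From mathcomp Require Import mpoly.
From mathcomp Require Import zify.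
Set Implicit Arguments.
Unset Strict Implicit.
Unset Printing Implicit Defensive.
Import Order.TTheory GRing.Theory.
Local Open Scope ring_scope.


Section LexRefinement.
Variables (n : nat) (T : eqType) (leT : rel T) (f : 'X_{1..n} -> T).

Definition lexby (leB : rel 'X_{1..n}) : rel 'X_{1..n} :=
  fun a b => if f a == f b then leB a b else leT (f a) (f b).

Lemma lexby_le leB a b : reflexive leT -> lexby leB a b -> leT (f a) (f b).
Proof. by move=> leTT; rewrite /lexby; case: eqP => [-> _|//]; apply: leTT. Qed.

Hypotheses (leT_anti : antisymmetric leT) (leT_trans : transitive leT)
  (leT_total : total leT).
Hypothesis leT_f0 : forall m, leT (f 0%MM) (f m).
Hypothesis f_addm : forall a b m, (f (a + m)%MM == f (b + m)%MM) = (f a == f b).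
Hypothesis leT_f_addm :
  forall a b m, leT (f a) (f b) -> leT (f (a + m)%MM) (f (b + m)%MM).

Lemma monomial_order_lexby leB : monomial_order leB -> monomial_order (lexby leB).
Proof.
move=> [leBB leB_anti leB_trans leB_total [leB0 leB_addm]]; split.
- by move=> a; rewrite /lexby eqxx.
- move=> a b /andP[]; rewrite /lexby eq_sym.
  case: eqP => [_ ab ba|fab ab ba]; first by apply: leB_anti; rewrite ab ba.
  by case: fab; apply: leT_anti; rewrite ab ba.
- move=> b a c; rewrite /lexby.
  case: (eqVneq (f a) (f b)) => [fab|fab]; case: (eqVneq (f b) (f c)) => [fbc|fbc].
  + by rewrite fab fbc eqxx; apply: leB_trans.
  + by rewrite fab (negbTE fbc).
  + by rewrite -fbc (negbTE fab).
  + move=> ab bc; case: (eqVneq (f a) (f c)) => [fac|_]; last exact: leT_trans bc.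
    by case/eqP: fab; apply: leT_anti; rewrite ab fac bc.
- by move=> a b; rewrite /lexby eq_sym; case: eqP => _; [apply: leB_total|apply: leT_total].
- split=> [m|a b m]; rewrite /lexby; first by case: eqP => _; [apply: leB0|apply: leT_f0].
  by rewrite f_addm; case: eqP => _; [apply: leB_addm|apply: leT_f_addm].
Qed.

End LexRefinement.

Lemma monomial_order_lexby_morph n k (leA : rel 'X_{1..k})
    (f : 'X_{1..n} -> 'X_{1..k}) leB :
  monomial_order leA -> monomial_order leB -> f 0%MM = 0%MM ->
  {morph f : a b / (a + b)%MM} -> monomial_order (lexby leA f leB).
Proof.
move=> [_ leA_anti leA_trans leA_total [leA0 leA_addm]] moB f0 fD.
apply: monomial_order_lexby => //; first by move=> m; rewrite f0.
  by move=> a b m; rewrite !fD (inj_eq (@addIm _ (f m))).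
by move=> a b m; rewrite !fD; apply: leA_addm.
Qed.

Lemma monomial_order_lexby_weight n (w : 'X_{1..n} -> nat) leB :
  monomial_order leB -> w 0%MM = 0%N ->
  {morph w : a b / (a + b)%MM >-> (a + b)%N} -> monomial_order (lexby leq w leB).
Proof.
move=> moB w0 wD; apply: monomial_order_lexby => //.
- exact: anti_leq.
- exact: leq_trans.
- exact: leq_total.
- by move=> m; rewrite w0.
- by move=> a b m; rewrite !wD eqn_add2r.
- by move=> a b m; rewrite !wD leq_add2r.
Qed.

Definition mnmc n : rel 'X_{1..n} := fun a b => (a <= b)%O.

Lemma monomial_order_mnmc n : monomial_order (@mnmc n).
Proof.
split=> [a|a b|b a c|a b|]; rewrite /mnmc.
- exact: lexx.
- exact: le_anti.
- exact: le_trans.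
- exact: le_total.
- by split=> [m|a b m]; rewrite ?le0m ?lemc_add2l.
Qed.

Section MonomialFacts.
Variable n : nat.
Implicit Types (a b m : 'X_{1..n}).

Definition mweight (c : 'I_n -> nat) m := (\sum_(i < n) m i * c i)%N.

Lemma mweight0 c : mweight c 0%MM = 0%N.
Proof. by rewrite /mweight big1 // => i _; rewrite mnm0E. Qed.

Lemma mweightD c a b : mweight c (a + b)%MM = (mweight c a + mweight c b)%N.
Proof. by rewrite /mweight -big_split; apply: eq_bigr => i _; rewrite mnmDE mulnDl. Qed.

Lemma mweightU c i : mweight c U_(i)%MM = c i.
Proof.
rewrite /mweight (bigD1 i) //= big1 ?mnm1E ?eqxx ?mul1n ?addn0 // => t ne_ti.
by rewrite mnm1E eq_sym (negbTE ne_ti).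
Qed.

Lemma mweight_ge c m i : (m i * c i <= mweight c m)%N.
Proof. by rewrite /mweight (bigD1 i) //= leq_addr. Qed.

Lemma mweight_eq0 c m : mweight c m = 0%N <-> forall i, (0 < m i)%N -> c i = 0%N.
Proof.
split=> [m0 i mi|c0]; last by apply/eqP; rewrite sum_nat_eq0; apply/forallP => i;
  case: (posnP (m i)) => [->|/c0 ->]; rewrite ?muln0.
by have := mweight_ge c m i; rewrite m0 leqn0 muln_eq0 eqn0Ngt mi => /eqP.
Qed.

Lemma sqfree_mnmP m : reflect (forall i, m i <= 1)%N (sqfree_mnm m).
Proof. exact: forallP. Qed.

Lemma sqfree_mnm0 : sqfree_mnm (0%MM : 'X_{1..n}).
Proof. by apply/sqfree_mnmP => i; rewrite mnm0E. Qed.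

Lemma sqfree_mnmU i : sqfree_mnm (U_(i) : 'X_{1..n})%MM.
Proof. by apply/sqfree_mnmP => t; rewrite mnm1E; case: (_ == _). Qed.

Lemma sqfree_mnmB a b : sqfree_mnm a -> sqfree_mnm (a - b)%MM.
Proof. by move/sqfree_mnmP=> sa; apply/sqfree_mnmP => i; rewrite mnmBE; have := sa i; lia. Qed.

Lemma sqfree_mnmDU a i : sqfree_mnm a -> a i = 0%N -> sqfree_mnm (a + U_(i))%MM.
Proof.
move/sqfree_mnmP=> sa ai0; apply/sqfree_mnmP => t; rewrite mnmDE mnm1E.
by case: eqP => [<-|_]; rewrite ?ai0 ?addn0.
Qed.

Lemma sqfree_mnmUU i j : i != j -> sqfree_mnm (U_(i) + U_(j) : 'X_{1..n})%MM.
Proof. by move=> ne_ij; rewrite sqfree_mnmDU ?sqfree_mnmU // mnm1E (negbTE ne_ij). Qed.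

Lemma lem_DU a m i : (a <= m)%MM -> a i = 0%N -> (0 < m i)%N -> (a + U_(i) <= m)%MM.
Proof.
move/mnm_lepP=> am ai0 mi; apply/mnm_lepP => t; rewrite mnmDE mnm1E.
by case: eqP => [<-|_]; rewrite ?ai0 ?addn0.
Qed.

Lemma mnm_supp_ne0 m : m != 0%MM -> exists i, (0 < m i)%N.
Proof.
move=> m_ne0; apply/existsP; apply: contraR m_ne0 => /existsPn m0.
by apply/eqP/mnmP => i; rewrite mnm0E; apply/eqP; rewrite -leqn0 leqNgt m0.
Qed.

Lemma subm1K m i : (0 < m i)%N -> (m - U_(i) + U_(i))%MM = m.
Proof. by move=> mi; rewrite submK // lep1mP -lt0n. Qed.

End MonomialFacts.

Definition sqfree_move (T : Type) n (F : 'X_{1..n} -> T) (le : rel 'X_{1..n}) m :=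
  exists a b, [/\ sqfree_mnm a, sqfree_mnm b, (a <= m)%MM, F a = F b &
                  le b a && (b != a)].

Definition sqfree_moves (T : Type) n (F : 'X_{1..n} -> T) (le : rel 'X_{1..n}) :=
  forall m m', F m = F m' -> le m' m -> m' != m -> sqfree_move F le m.

Lemma eq_sqfree_moves n (T T' : Type) (F : 'X_{1..n} -> T) (G : 'X_{1..n} -> T') le :
  (forall x y, F x = F y <-> G x = G y) -> sqfree_moves F le -> sqfree_moves G le.
Proof.
move=> FG Fmoves m m' /FG Fm le_m'm ne_m'm.
have [a [b [sa sb am /FG Gab ba]]] := Fmoves m m' Fm le_m'm ne_m'm.
by exists a, b.
Qed.

Lemma sqfree_moves_const n (T : Type) (t : T) (le : rel 'X_{1..n}) :
  monomial_order le -> sqfree_moves (fun=> t) le.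
Proof.
move=> [_ le_anti _ _ [le0 _]] m m' _ le_m'm ne_m'm.
have [i mi] : exists i, (0 < m i)%N.
  apply: mnm_supp_ne0; apply: contra ne_m'm => /eqP m0.
  by apply/eqP/le_anti; rewrite le_m'm m0 le0.
exists U_(i)%MM, 0%MM; split; rewrite ?sqfree_mnmU ?sqfree_mnm0 ?le0 //.
  by rewrite lep1mP -lt0n.
by rewrite eq_sym mnm1_eq0.
Qed.

Section DegreeFibers.
Variable n : nat.

Definition deg_order : rel 'X_{1..n} :=
  lexby leq mdeg (lexby leq (mweight val) (@mnmc n)).

Lemma monomial_order_deg : monomial_order deg_order.
Proof.
apply: monomial_order_lexby_weight; [|exact: mdeg0|exact: mdegD].
apply: monomial_order_lexby_weight; [exact: monomial_order_mnmc|exact: mweight0|exact: mweightD].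
Qed.

(* Every monomial other than the power of the first variable is moved towards it. *)
Lemma sqfree_moves_mdeg : (0 < n)%N -> sqfree_moves (@mdeg n) deg_order.
Proof.
move=> n_gt0 m m' deg_mm' le_m'm ne_m'm; pose z := Ordinal n_gt0.
case: (boolP [exists i, (0 < m i)%N && (0 < i)%N]) => [/existsP[i /andP[mi i_gt0]]|].
  exists U_(i)%MM, U_(z)%MM; split; rewrite ?sqfree_mnmU ?mdeg1 //.
    by rewrite lep1mP -lt0n.
  rewrite /deg_order /lexby !mdeg1 eqxx !mweightU /= eq_sym (negbTE (lt0n_neq0 i_gt0)) /=.
  by rewrite eq_mnm1; apply/eqP => /(congr1 val) /= i0; rewrite -i0 in i_gt0.
move/existsPn => m_at_z; exfalso; move/negP: ne_m'm; apply.
have at_z (x : 'X_{1..n}) : mweight val x = 0%N -> x = (U_(z) *+ mdeg x)%MM.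
  move/mweight_eq0 => x0; apply/mnmP => j; rewrite mulmnE mnm1E mdegE (bigD1 z) //=.
  rewrite big1 ?addn0 => [|t ne_tz]; last first.
    by case: (posnP (x t)) => // /x0 t0; case/eqP: ne_tz; apply: val_inj.
  case: eqP => [<-|ne_zj]; rewrite ?mul1n // mul0n.
  by case: (posnP (x j)) => // /x0 j0; case: ne_zj; apply: val_inj.
have wm : mweight val m = 0%N.
  by apply/mweight_eq0 => i mi; have := m_at_z i; rewrite mi /=; lia.
move: le_m'm; rewrite /deg_order /lexby deg_mm' eqxx => /(lexby_le leqnn).
by rewrite wm leqn0 => /eqP /at_z ->; rewrite (at_z _ wm) deg_mm'.
Qed.

End DegreeFibers.

Lemma msupp_binomial (R : nzRingType) n (a b mu : 'X_{1..n}) : a != b ->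
  (mu \in msupp ('X_[a] - 'X_[b] : {mpoly R[n]})) = (mu == a) || (mu == b).
Proof.
move=> ne_ab; rewrite mcoeff_msupp mcoeffB !mcoeffX (eq_sym mu a) (eq_sym mu b).
case: (a =P mu) => [amu|_]; case: (b =P mu) => [bmu|_] /=.
- by rewrite amu bmu eqxx in ne_ab.
- by rewrite subr0 oner_eq0.
- by rewrite sub0r oppr_eq0 oner_eq0.
- by rewrite subrr eqxx.
Qed.

Lemma is_lead_binomial (K : fieldType) n (le : rel 'X_{1..n}) (a b : 'X_{1..n}) :
  reflexive le -> a != b -> le b a -> is_lead le ('X_[a] - 'X_[b] : {mpoly K[n]}) a.
Proof.
move=> leR ne_ab le_ba; split=> [|mu]; rewrite msupp_binomial // ?eqxx //.
by case/orP=> /eqP ->.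
Qed.

Section MonomialMap.
Variables (K : fieldType) (n k : nat) (psi : 'I_n -> 'X_{1..k}).

Definition monomap (m : 'X_{1..n}) : 'X_{1..k} := (\sum_(i < n) psi i *+ m i)%MM.

Variable h : 'I_n -> {mpoly K[k]}.
Hypothesis hE : forall i, h i = 'X_[psi i].

Definition monoker : pred {mpoly K[n]} :=
  fun p => mmap (fun c : K => c%:MP) h p == 0.

Let hmap p := mmap (fun c : K => c%:MP) h p.

Lemma mmap1_monomap m : mmap1 h m = 'X_[monomap m].
Proof.
rewrite /mmap1 /monomap -mprodXnE.
by apply: eq_bigr => i _; rewrite hE.
Qed.

Lemma mcoeff_hmap p mu : (hmap p)@_mu = \sum_(m <- msupp p | monomap m == mu) p@_m.
Proof.
rewrite /hmap /mmap (big_morph (mcoeff mu) (@mcoeffD _ _ mu) (@mcoeff0 _ _ mu)).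
rewrite [RHS]big_mkcond /=; apply: eq_bigr => m _.
by rewrite mmap1_monomap mcoeffCM mcoeffX; case: eqP; rewrite ?mulr1 ?mulr0.
Qed.

Lemma monoker_binomial (a b : 'X_{1..n}) :
  monoker ('X_[a] - 'X_[b]) = (monomap a == monomap b).
Proof.
rewrite /monoker raddfB /= /mmap !msuppX !big_seq1 !mcoeffX !eqxx !mpolyC1 !mul1r.
rewrite !mmap1_monomap subr_eq0; apply/eqP/eqP => [|->//] /(congr1 (mcoeff (monomap a))).
by rewrite !mcoeffX eqxx; case: eqP => // _ /eqP; rewrite oner_eq0.
Qed.

Lemma monoker_mate f mf : monoker f -> mf \in msupp f ->
  exists2 m', m' \in msupp f & (m' != mf) && (monomap m' == monomap mf).
Proof.
move=> f_ker mf_supp; apply/hasP; apply: contraLR f_ker => /hasPn no_mate.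
apply/eqP => /(congr1 (mcoeff (monomap mf))); rewrite -/(hmap f) mcoeff0.
rewrite mcoeff_hmap big_mkcond (bigD1_seq mf) ?msupp_uniq //= eqxx big1_seq ?addr0.
  by move/eqP; rewrite mcoeff_eq0 mf_supp.
by move=> m /andP[ne_mmf m_supp]; have := no_mate m m_supp; rewrite ne_mmf /=; case: eqP.
Qed.

Definition mnm_of_set (A : {set 'I_n}) : 'X_{1..n} := [multinom (i \in A : nat) | i < n].

Lemma sqfree_mnm_of_set A : sqfree_mnm (mnm_of_set A).
Proof. by apply/sqfree_mnmP => i; rewrite mnmE; case: (i \in A). Qed.

Lemma mnm_of_set_sqfree a : sqfree_mnm a -> mnm_of_set [set i | a i == 1%N] = a.
Proof.
move/sqfree_mnmP => sa; apply/mnmP => i; rewrite mnmE inE.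
by have := sa i; case: (a i) => [|[]].
Qed.

Lemma sqfree_moves_of_gb : has_sqfree_gb monoker ->
  exists le, monomial_order le /\ sqfree_moves monomap le.
Proof.
move=> [le [gb [le_mo [gb_ker gb_lead] gb_sqfree]]].
exists le; split=> // m m' Fmm' le_m'm ne_m'm; have [leR _ _ _ _] := le_mo.
have f_ker : monoker ('X_[m] - 'X_[m']) by rewrite monoker_binomial Fmm'.
have ne_mm' : m != m' by rewrite eq_sym.
have [g [mg [g_gb [mg_supp mg_max] mg_m]]] :=
  gb_lead _ _ f_ker (is_lead_binomial K leR ne_mm' le_m'm).
have [a [b [sa sb gE]]] := gb_sqfree _ g_gb.
have Fab : monomap a = monomap b.
  by apply/eqP; rewrite -monoker_binomial -gE; apply: gb_ker.
have ne_ab : a != b by apply: contraTneq mg_supp; rewrite gE => ->; rewrite subrr msupp0.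
move: mg_supp mg_m (mg_max); rewrite gE msupp_binomial // => /orP[]/eqP -> mgm mg_max'.
- exists a, b; split=> //; rewrite eq_sym ne_ab andbT.
  by apply: mg_max'; rewrite msupp_binomial // eqxx orbT.
- exists b, a; split=> //; rewrite ne_ab andbT.
  by apply: mg_max'; rewrite msupp_binomial // eqxx.
Qed.

Lemma gb_of_sqfree_moves le : monomial_order le -> sqfree_moves monomap le ->
  has_sqfree_gb monoker.
Proof.
move=> le_mo moves; have [leR _ _ _ _] := le_mo.
pose binom (x : {set 'I_n} * {set 'I_n}) : {mpoly K[n]} :=
  'X_[mnm_of_set x.1] - 'X_[mnm_of_set x.2].
pose is_move (x : {set 'I_n} * {set 'I_n}) :=
  [&& monomap (mnm_of_set x.1) == monomap (mnm_of_set x.2),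
      le (mnm_of_set x.2) (mnm_of_set x.1) & mnm_of_set x.2 != mnm_of_set x.1].
exists le, [seq binom x | x <- enum is_move]; split=> //; last first.
  move=> g /mapP[x _ ->]; exists (mnm_of_set x.1), (mnm_of_set x.2).
  by split; rewrite ?sqfree_mnm_of_set.
split=> [g /mapP[x]|f mf f_ker [mf_supp mf_max]].
  by rewrite mem_enum => /and3P[Fx _ _] ->; move: Fx; rewrite -monoker_binomial; apply.
have [m' m'_supp /andP[ne_m'mf /eqP Fm'mf]] := monoker_mate f_ker mf_supp.
have [a [b [sa sb amf Fab /andP[le_ba ne_ba]]]] :=
  moves _ _ (esym Fm'mf) (mf_max _ m'_supp) ne_m'mf.
exists ('X_[a] - 'X_[b]), a; split=> //.
  apply/mapP; exists ([set i | a i == 1%N], [set i | b i == 1%N]).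
    by rewrite mem_enum unfold_in /= !mnm_of_set_sqfree // Fab eqxx le_ba ne_ba.
  by rewrite /binom /= !mnm_of_set_sqfree.
by apply: is_lead_binomial; rewrite // eq_sym.
Qed.

End MonomialMap.

Section Pushforward.
Variables (n k : nat) (r : 'I_n -> 'I_k).
Implicit Types (m a b : 'X_{1..n}).

Definition push m : 'X_{1..k} := [multinom (\sum_(i < n | r i == j) m i)%N | j < k].

Lemma pushE m j : push m j = (\sum_(i < n | r i == j) m i)%N.
Proof. by rewrite mnmE. Qed.

Lemma push0 : push 0%MM = 0%MM.
Proof. by apply/mnmP => j; rewrite pushE mnm0E big1 // => i _; rewrite mnm0E. Qed.

Lemma pushD a b : push (a + b)%MM = (push a + push b)%MM.
Proof.
apply/mnmP => j; rewrite mnmDE !pushE -big_split /=.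
by apply: eq_bigr => i _; rewrite mnmDE.
Qed.

Lemma pushU i : push U_(i)%MM = U_(r i)%MM.
Proof.
apply/mnmP => j; rewrite pushE mnm1E.
have [<-|ne_rij] := eqVneq (r i) j.
  rewrite (bigD1 i) //= big1 ?addn0 ?mnm1E ?eqxx // => t /andP[_ ne_ti].
  by rewrite mnm1E eq_sym (negbTE ne_ti).
rewrite big1 // => t /eqP rtj; rewrite mnm1E.
by case: eqP => // it; rewrite -it in rtj; rewrite rtj eqxx in ne_rij.
Qed.

Lemma mweight_push (c : 'I_k -> nat) m : mweight (c \o r) m = mweight c (push m).
Proof.
rewrite /mweight (partition_big r xpredT) //=; apply: eq_bigr => j _.
by rewrite pushE big_distrl /=; apply: eq_bigr => i /eqP <-.
Qed.

Lemma mdeg_push m : mdeg (push m) = mdeg m.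
Proof.
rewrite !mdegE (partition_big r xpredT) //=.
by apply: eq_bigr => j _; rewrite pushE.
Qed.

Lemma push_ge m i : (m i <= push m (r i))%N.
Proof. by rewrite pushE (bigD1 i) //= leq_addr. Qed.

Lemma push_gt0 m j : (0 < push m j)%N -> exists2 i, r i = j & (0 < m i)%N.
Proof.
rewrite pushE lt0n sum_nat_eq0 => /forallPn[i]; rewrite negb_imply -lt0n => /andP[/eqP].
by exists i.
Qed.

Lemma push_eq0 m i : push m (r i) = 0%N -> m i = 0%N.
Proof. by move=> m0; have := push_ge m i; rewrite m0 leqn0 => /eqP. Qed.

End Pushforward.

Section LiftMoves.
Variables (n k k' : nat) (r : 'I_n -> 'I_k) (r' : 'I_n -> 'I_k').
Variable s : 'I_k -> 'I_k' -> 'I_n.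
Hypotheses (r_s : forall x y, r (s x y) = x) (r'_s : forall x y, r' (s x y) = y).

Lemma lift_sqfree_pair (m : 'X_{1..n}) d (a1 b1 : 'X_{1..k}) :
  mdeg a1 = d -> mdeg b1 = d -> sqfree_mnm a1 -> sqfree_mnm b1 ->
  (a1 <= push r m)%MM ->
  exists a b : 'X_{1..n}, [/\ sqfree_mnm a, sqfree_mnm b, (a <= m)%MM,
     push r a = a1 & push r b = b1 /\ push r' b = push r' a].
Proof.
elim: d a1 b1 => [|d IH] a1 b1 da1 db1 sa1 sb1 a1m.
  move/eqP: da1; move/eqP: db1; rewrite !mdeg_eq0 => /eqP -> /eqP ->.
  exists 0%MM, 0%MM; split; rewrite ?push0 ?sqfree_mnm0 //.
  by apply/mnm_lepP => i; rewrite mnm0E.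
have [j a1j] : exists j, (0 < a1 j)%N by apply: mnm_supp_ne0; rewrite -mdeg_eq0 da1.
have [j' b1j'] : exists j', (0 < b1 j')%N by apply: mnm_supp_ne0; rewrite -mdeg_eq0 db1.
have a1'j : (a1 - U_(j))%MM j = 0%N.
  by rewrite mnmBE mnm1E eqxx; move/sqfree_mnmP: sa1 => /(_ j); lia.
have b1'j' : (b1 - U_(j'))%MM j' = 0%N.
  by rewrite mnmBE mnm1E eqxx; move/sqfree_mnmP: sb1 => /(_ j'); lia.
have [a' [b' [sa' sb' a'm pa' [pb' pb'a']]]] :
    exists a b : 'X_{1..n}, [/\ sqfree_mnm a, sqfree_mnm b, (a <= m)%MM,
      push r a = (a1 - U_(j))%MM & push r b = (b1 - U_(j'))%MM /\ push r' b = push r' a].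
  apply: IH; rewrite ?sqfree_mnmB //; last exact: lepm_trans (lem_subr _ _) a1m.
    by move: da1; rewrite -{1}(subm1K a1j) mdegD mdeg1 addn1 => -[].
  by move: db1; rewrite -{1}(subm1K b1j') mdegD mdeg1 addn1 => -[].
have [i rij mi] : exists2 i, r i = j & (0 < m i)%N.
  by apply: push_gt0; apply: leq_trans a1j _; apply/mnm_lepP.
set x := s j' (r' i).
have a'i : a' i = 0%N by apply: (push_eq0 (r := r)); rewrite pa' rij.
have b'x : b' x = 0%N by apply: (push_eq0 (r := r)); rewrite pb' r_s.
exists (a' + U_(i))%MM, (b' + U_(x))%MM; split; rewrite ?sqfree_mnmDU ?lem_DU //.
- by rewrite pushD pushU pa' rij subm1K.
- by rewrite !pushD !pushU pb' pb'a' r_s r'_s subm1K.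
Qed.

End LiftMoves.

Lemma ord_min_exists k (P : pred 'I_k) : (exists j, P j) ->
  exists j, P j /\ forall j', P j' -> (j <= j')%N.
Proof. by move=> [j Pj]; case: (arg_minnP (@nat_of_ord k) Pj) => j0; exists j0. Qed.

Section ToricFiberProduct.
Variables (n n1 n2 : nat) (r1 : 'I_n -> 'I_n1) (r2 : 'I_n -> 'I_n2).
Variable s : 'I_n1 -> 'I_n2 -> 'I_n.
Hypotheses (r1_s : forall x y, r1 (s x y) = x) (r2_s : forall x y, r2 (s x y) = y).
Implicit Types (m a b : 'X_{1..n}).

Definition canonical i := s (r1 i) (r2 i) == i.

Local Notation noncanon := (mweight (fun i => (~~ canonical i : nat))).

(* Uncrossing [U_i + U_k] with [r1 i < r1 k] and [r2 k < r2 i] strictly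
   decreases this weight. *)
Local Notation cross_weight := (mweight (fun i => r1 i * (n2 - r2 i))%N).

Definition canonical_mnm m := forall i, (0 < m i)%N -> canonical i.

Definition crossing m := [exists i, exists k,
  [&& 0 < m i, 0 < m k, r1 i < r1 k & r2 k < r2 i]%N].

Lemma canonical_s x y : canonical (s x y).
Proof. by rewrite /canonical r1_s r2_s. Qed.

Lemma noncanon_eq0 m : noncanon m = 0%N <-> canonical_mnm m.
Proof. by rewrite mweight_eq0; split=> cm i /cm; case: (canonical i). Qed.

Lemma canonical_mnm_le m0 m : canonical_mnm m -> (m0 <= m)%MM -> canonical_mnm m0.
Proof. by move=> cm /mnm_lepP le_m0m i m0i; apply: cm; apply: leq_trans m0i (le_m0m i). Qed.

Lemma noncrossingP m : ~~ crossing m -> forall i k, (0 < m i)%N -> (0 < m k)%N ->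
  (r1 i < r1 k)%N -> (r2 i <= r2 k)%N.
Proof.
move=> /existsPn ncr i k mi mk lt_ik; have /existsPn/(_ k) := ncr i.
by rewrite mi mk lt_ik /= -leqNgt.
Qed.

Lemma noncrossing_le m0 m : ~~ crossing m -> (m0 <= m)%MM -> ~~ crossing m0.
Proof.
move=> ncr /mnm_lepP le_m0m; apply/existsPn => i; apply/existsPn => k.
apply/negP => /and4P[m0i m0k lt1 lt2].
have := noncrossingP ncr (leq_trans m0i (le_m0m i)) (leq_trans m0k (le_m0m k)) lt1; lia.
Qed.

Definition cross_pair i k : 'X_{1..n} := (U_(i) + U_(k))%MM.
Definition uncross_pair i k : 'X_{1..n} := (U_(s (r1 i) (r2 k)) + U_(s (r1 k) (r2 i)))%MM.

Lemma push1_uncross i k : push r1 (uncross_pair i k) = push r1 (cross_pair i k).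
Proof. by rewrite !pushD !pushU !r1_s. Qed.

Lemma push2_uncross i k : push r2 (uncross_pair i k) = push r2 (cross_pair i k).
Proof. by rewrite !pushD !pushU !r2_s addmC. Qed.

Lemma canonical_uncross_pair i k : canonical_mnm (uncross_pair i k).
Proof.
move=> t; rewrite mnmDE !mnm1E.
by do 2![case: eqP => [<-|_]; first by rewrite canonical_s].
Qed.

Lemma noncanon_uncross_pair i k : noncanon (uncross_pair i k) = 0%N.
Proof. by apply/noncanon_eq0; apply: canonical_uncross_pair. Qed.

Section Uncross.
Variables i k : 'I_n.
Hypotheses (lt1 : (r1 i < r1 k)%N) (lt2 : (r2 k < r2 i)%N).

Lemma cross_weight_uncross :
  (cross_weight (uncross_pair i k) < cross_weight (cross_pair i k))%N.
Proof.
rewrite !mweightD !mweightU !r1_s !r2_s.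
have := ltn_ord (r2 i); have := ltn_ord (r2 k); have := lt2; have := lt1.
set p := nat_of_ord (r1 i); set p' := nat_of_ord (r1 k).
set q := nat_of_ord (r2 i); set q' := nat_of_ord (r2 k) => lt_pp' lt_q'q lt_q'n2 lt_qn2.
have -> : (n2 - q' = (n2 - q) + (q - q'))%N by lia.
have : (0 < q - q')%N by lia.
rewrite !mulnDr; nia.
Qed.

Lemma sqfree_cross_pair : sqfree_mnm (cross_pair i k).
Proof. by apply: sqfree_mnmUU; apply: contraTneq lt1 => ->; rewrite ltnn. Qed.

Lemma sqfree_uncross_pair : sqfree_mnm (uncross_pair i k).
Proof.
by apply: sqfree_mnmUU; apply: contraTneq lt1 => /(congr1 r1); rewrite !r1_s => ->; rewrite ltnn.
Qed.

Lemma cross_pair_le m : (0 < m i)%N -> (0 < m k)%N -> (cross_pair i k <= m)%MM.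
Proof.
move=> mi mk; apply: lem_DU; rewrite // ?lep1mP -?lt0n // mnm1E.
by case: eqP => // ik; have := lt1; rewrite ik ltnn.
Qed.

End Uncross.

Lemma uncross_step m : canonical_mnm m -> crossing m -> exists m2,
  [/\ canonical_mnm m2, push r1 m2 = push r1 m, push r2 m2 = push r2 m &
      (cross_weight m2 < cross_weight m)%N].
Proof.
move=> cm /existsP[i /existsP[k /and4P[mi mk lt1 lt2]]].
have le_cm := cross_pair_le lt1 mi mk.
exists (m - cross_pair i k + uncross_pair i k)%MM; split.
- move=> t; rewrite mnmDE addn_gt0 => /orP[|]; last exact: canonical_uncross_pair.
  by rewrite mnmBE => mt; apply: cm; lia.
- by rewrite pushD push1_uncross -pushD submK.
- by rewrite pushD push2_uncross -pushD submK.
- by have := cross_weight_uncross lt1 lt2; rewrite -{2}(submK le_cm) !mweightD; lia.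
Qed.

Lemma min_corner_supp m p0 q0 : canonical_mnm m -> ~~ crossing m ->
  (0 < push r1 m p0)%N -> (forall j, (0 < push r1 m j)%N -> (p0 <= j)%N) ->
  (0 < push r2 m q0)%N -> (forall j, (0 < push r2 m j)%N -> (q0 <= j)%N) ->
  (0 < m (s p0 q0))%N.
Proof.
move=> cm ncm mp0 p0_min mq0 q0_min.
have [k rk mk] := push_gt0 mp0; have [i ri mi] := push_gt0 mq0.
have q0k : (q0 <= r2 k)%N by apply: q0_min; apply: leq_trans mk (push_ge _ _ _).
have [lt_p0i|le_ip0] := ltnP p0 (r1 i).
  have := noncrossingP ncm mk mi; rewrite rk ri => /(_ lt_p0i) le_kq0.
  have r2k : r2 k = q0 by apply/val_inj/eqP; rewrite eqn_leq le_kq0 q0k.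
  by move/eqP: (cm k mk); rewrite rk r2k => ->.
have r1i : r1 i = p0.
  apply/val_inj/eqP; rewrite eqn_leq le_ip0 p0_min //.
  exact: leq_trans mi (push_ge _ _ _).
by move/eqP: (cm i mi); rewrite r1i ri => ->.
Qed.

(* Peel off the corner variable of minimal margins and induct on the degree. *)
Lemma noncrossing_unique m m' : canonical_mnm m -> canonical_mnm m' ->
  ~~ crossing m -> ~~ crossing m' ->
  push r1 m = push r1 m' -> push r2 m = push r2 m' -> m = m'.
Proof.
have [d] := ubnP (mdeg m); elim: d m m' => // d IH m m' deg_m cm cm' ncm ncm' e1 e2.
have deg_m' : mdeg m' = mdeg m by rewrite -(mdeg_push r1) -e1 mdeg_push.
have [/eqP|deg_m_gt0] := posnP (mdeg m).
  by rewrite mdeg_eq0 => /eqP m0; move/eqP: deg_m'; rewrite m0 mdeg0 mdeg_eq0 => /eqP.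
have [t mt] : exists t, (0 < m t)%N by apply: mnm_supp_ne0; rewrite -mdeg_eq0 -lt0n.
have [p0 [mp0 p0_min]] := ord_min_exists (P := fun j => 0 < push r1 m j)%N
  (ex_intro _ (r1 t) (leq_trans mt (push_ge r1 m t))).
have [q0 [mq0 q0_min]] := ord_min_exists (P := fun j => 0 < push r2 m j)%N
  (ex_intro _ (r2 t) (leq_trans mt (push_ge r2 m t))).
have mx := min_corner_supp cm ncm mp0 p0_min mq0 q0_min.
have m'x : (0 < m' (s p0 q0))%N by apply: min_corner_supp; rewrite -?e1 -?e2.
rewrite -(subm1K mx) -(subm1K m'x); congr (_ + _)%MM; apply: IH.
- by move: deg_m; rewrite -{1}(subm1K mx) mdegD mdeg1 addn1.
- exact: canonical_mnm_le cm (lem_subr _ _).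
- exact: canonical_mnm_le cm' (lem_subr _ _).
- exact: noncrossing_le ncm (lem_subr _ _).
- exact: noncrossing_le ncm' (lem_subr _ _).
- by apply: (@addIm _ (push r1 U_(s p0 q0))); rewrite -!pushD !subm1K.
- by apply: (@addIm _ (push r2 U_(s p0 q0))); rewrite -!pushD !subm1K.
Qed.

Lemma untangle m : canonical_mnm m -> exists m0,
  [/\ canonical_mnm m0, ~~ crossing m0, push r1 m0 = push r1 m,
      push r2 m0 = push r2 m & (cross_weight m0 <= cross_weight m)%N].
Proof.
have [w] := ubnP (cross_weight m); elim: w m => // w IH m wm cm.
have [crm|ncrm] := boolP (crossing m); last by exists m.
have [m2 [cm2 e1 e2 w2]] := uncross_step cm crm.
have [m0 [cm0 ncm0 f1 f2 w0]] := IH m2 (leq_trans w2 wm) cm2.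
by exists m0; split; rewrite ?f1 ?f2 //; apply: leq_trans w0 (ltnW w2).
Qed.

Lemma tfp_tie_min m m' : canonical_mnm m -> ~~ crossing m ->
  push r1 m' = push r1 m -> push r2 m' = push r2 m ->
  lexby leq noncanon (lexby leq cross_weight (@mnmc n)) m' m -> m' = m.
Proof.
move=> cm ncm e1 e2 le_m'm.
have nc_m : noncanon m = 0%N by apply/noncanon_eq0.
have nc_m' : noncanon m' = 0%N by apply/eqP; rewrite -leqn0 -nc_m (lexby_le leqnn le_m'm).
have cm' : canonical_mnm m' by apply/noncanon_eq0.
move: le_m'm; rewrite /lexby nc_m nc_m' eqxx => /(lexby_le leqnn) w_m'm.
have [crm'|ncm'] := boolP (crossing m'); last exact: noncrossing_unique.
have [m2 [cm2 f1 f2 w2]] := uncross_step cm' crm'.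
have [m0 [cm0 ncm0 g1 g2 w0]] := untangle cm2.
have m0m : m0 = m by apply: noncrossing_unique; rewrite ?g1 ?g2 ?f1 ?f2.
by exfalso; move: w0 w2 w_m'm; rewrite m0m; lia.
Qed.

Variables (T1 T2 : Type) (F1 : 'X_{1..n1} -> T1) (F2 : 'X_{1..n2} -> T2).
Variables (le1 : rel 'X_{1..n1}) (le2 : rel 'X_{1..n2}).

Definition tfp_fiber m := (F1 (push r1 m), F2 (push r2 m)).

Definition tfp_order : rel 'X_{1..n} :=
  lexby le1 (push r1) (lexby le2 (push r2)
    (lexby leq noncanon (lexby leq cross_weight (@mnmc n)))).

Lemma monomial_order_tfp :
  monomial_order le1 -> monomial_order le2 -> monomial_order tfp_order.
Proof.
move=> mo1 mo2.
apply: monomial_order_lexby_morph => //; [|exact: push0|exact: pushD].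
apply: monomial_order_lexby_morph => //; [|exact: push0|exact: pushD].
apply: monomial_order_lexby_weight; [|exact: mweight0|exact: mweightD].
apply: monomial_order_lexby_weight; [|exact: mweight0|exact: mweightD].
exact: monomial_order_mnmc.
Qed.

Lemma tfp_move_noncanonical m i : (0 < m i)%N -> ~~ canonical i ->
  sqfree_move tfp_fiber tfp_order m.
Proof.
move=> mi nci; exists U_(i)%MM, U_(s (r1 i) (r2 i))%MM.
split; rewrite ?sqfree_mnmU ?lep1mP -?lt0n //.
  by rewrite /tfp_fiber !pushU r1_s r2_s.
rewrite /tfp_order /lexby !pushU r1_s r2_s !eqxx !mweightU /= canonical_s (negbTE nci).
by rewrite eq_mnm1.
Qed.

Lemma tfp_move_crossing m : canonical_mnm m -> crossing m ->
  sqfree_move tfp_fiber tfp_order m.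
Proof.
move=> cm /existsP[i /existsP[k /and4P[mi mk lt1 lt2]]].
have le_am := cross_pair_le lt1 mi mk.
have w_lt := cross_weight_uncross lt1 lt2.
exists (cross_pair i k), (uncross_pair i k).
split; rewrite ?(sqfree_cross_pair lt1) ?(sqfree_uncross_pair lt1) //.
  by rewrite /tfp_fiber push1_uncross push2_uncross.
rewrite /tfp_order /lexby push1_uncross push2_uncross !eqxx.
rewrite noncanon_uncross_pair (proj2 (noncanon_eq0 _) (canonical_mnm_le cm le_am)) eqxx.
rewrite (ltn_eqF w_lt) (ltnW w_lt) /=.
by apply: contraTneq w_lt => ->; rewrite ltnn.
Qed.

Hypotheses (F1_homog : forall x y, F1 x = F1 y -> mdeg x = mdeg y)
           (F2_homog : forall x y, F2 x = F2 y -> mdeg x = mdeg y).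
Hypotheses (F1_moves : sqfree_moves F1 le1) (F2_moves : sqfree_moves F2 le2).

Lemma tfp_move_margin1 m m' : tfp_fiber m = tfp_fiber m' ->
  push r1 m' != push r1 m -> le1 (push r1 m') (push r1 m) ->
  sqfree_move tfp_fiber tfp_order m.
Proof.
move=> [Fm _] ne1 le_1.
have [a1 [b1 [sa1 sb1 a1m Fab1 /andP[le_ba1 ne_ba1]]]] := F1_moves Fm le_1 ne1.
have [a [b [sa sb am pa [pb pba]]]] :=
  lift_sqfree_pair r1_s r2_s (erefl _) (esym (F1_homog Fab1)) sa1 sb1 a1m.
exists a, b; split=> //; first by rewrite /tfp_fiber pa pb pba Fab1.
rewrite /tfp_order /lexby pa pb (negbTE ne_ba1) le_ba1 /=.
by apply: contra_neq ne_ba1; rewrite -pa -pb => ->.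
Qed.

Lemma tfp_move_margin2 m m' : tfp_fiber m = tfp_fiber m' ->
  push r1 m' = push r1 m -> push r2 m' != push r2 m -> le2 (push r2 m') (push r2 m) ->
  sqfree_move tfp_fiber tfp_order m.
Proof.
move=> [_ Fm] e1 ne2 le_2.
have [a2 [b2 [sa2 sb2 a2m Fab2 /andP[le_ba2 ne_ba2]]]] := F2_moves Fm le_2 ne2.
have [a [b [sa sb am pa [pb pba]]]] :=
  lift_sqfree_pair (s := fun x y => s y x) (fun x y => r2_s y x) (fun x y => r1_s y x)
    (erefl _) (esym (F2_homog Fab2)) sa2 sb2 a2m.
exists a, b; split=> //; first by rewrite /tfp_fiber pa pb pba Fab2.
rewrite /tfp_order /lexby pba eqxx pa pb (negbTE ne_ba2) le_ba2 /=.
by apply: contra_neq ne_ba2; rewrite -pa -pb => ->.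
Qed.

Theorem sqfree_moves_tfp : sqfree_moves tfp_fiber tfp_order.
Proof.
move=> m m' Fmm' le_m'm ne_m'm.
have [/existsP[i /andP[mi nci]]|/existsPn mcan] :=
  boolP [exists i, (0 < m i)%N && ~~ canonical i].
  exact: tfp_move_noncanonical mi nci.
have cm : canonical_mnm m by move=> i mi; have := mcan i; rewrite mi negbK.
have [crm|ncrm] := boolP (crossing m); first exact: tfp_move_crossing.
move: le_m'm; rewrite /tfp_order /lexby.
have [e1|ne1] := eqVneq (push r1 m') (push r1 m); last exact: tfp_move_margin1 Fmm' ne1.
have [e2|ne2] := eqVneq (push r2 m') (push r2 m); last exact: tfp_move_margin2 Fmm' e1 ne2.
by move/(tfp_tie_min cm ncrm e1 e2)/eqP; rewrite (negbTE ne_m'm).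
Qed.

End ToricFiberProduct.

Section UnorderedPartitions.
Variable V : finType.

Definition upart_rep (P : upart V) : {set V} :=
  odflt set0 [pick A | val P == [set A; ~: A]].

Lemma upart_repE P : val P = [set upart_rep P; ~: upart_rep P].
Proof.
rewrite /upart_rep; case: pickP => [A /eqP //|no_rep].
by have /existsP[A /eqP PA] := valP P; have := no_rep A; rewrite PA eqxx.
Qed.

Lemma is_upart_set2C (A : {set V}) : is_upart [set A; ~: A].
Proof. by apply/existsP; exists A. Qed.

Definition upart_of (A : {set V}) : upart V := exist _ [set A; ~: A] (is_upart_set2C A).

Lemma upart_of_rep P : upart_of (upart_rep P) = P.
Proof. by apply/val_inj; rewrite /= -upart_repE. Qed.

Lemma upart_ofC A : upart_of (~: A) = upart_of A.
Proof. by apply/val_inj; rewrite /= setCK setUC. Qed.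

Lemma upart_rep_of A : upart_rep (upart_of A) = A \/ upart_rep (upart_of A) = ~: A.
Proof.
have : upart_rep (upart_of A) \in val (upart_of A) by rewrite upart_repE !inE eqxx.
by case/set2P; [left|right].
Qed.

Lemma nq_gt0 : (0 < nq V)%N.
Proof. by apply/card_gt0P; exists (upart_of set0). Qed.

Definition separates (A E : {set V}) :=
  [exists i in E, exists j in E, (i \in A) && (j \notin A)].

Lemma in_cutE (e : rel V) P (E : edge e) A :
  val P = [set A; ~: A] -> in_cut P E = separates A (val E).
Proof.
move=> PA; rewrite /in_cut /separates PA; apply/existsP/existsP => [[i]|[i]].
  case/andP=> iE /existsP[j /andP[jE /existsP[B /andP[/set2P[]-> /andP[iB jB]]]]].
    by exists i; rewrite iE; apply/existsP; exists j; rewrite jE iB jB.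
  exists j; rewrite jE; apply/existsP; exists i; rewrite iE.
  by move: iB jB; rewrite !inE negbK => -> ->.
case/andP=> iE /existsP[j /andP[jE ij]]; exists i; rewrite iE; apply/existsP.
by exists j; rewrite jE; apply/existsP; exists A; rewrite !inE eqxx.
Qed.

End UnorderedPartitions.

Section CutMonomials.
Variables (V : finType) (e : rel V).

Definition cut_mnm (i : 'I_(nq V)) : 'X_{1..ne e + ne e} :=
  (\sum_(E : edge e) U_(if in_cut (enum_val i) E then lshift (ne e) (enum_rank E)
                       else rshift (ne e) (enum_rank E)))%MM.

Lemma phi_varE (K : fieldType) i : phi_var K e i = 'X_[cut_mnm i].
Proof.
rewrite /phi_var /cut_mnm -mprodXE; apply: eq_bigr => E _.
by rewrite /s_var /t_var; case: in_cut.
Qed.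

Definition cut_count (m : 'X_{1..nq V}) (E : edge e) (b : bool) :=
  mweight (fun i => (in_cut (enum_val i) E == b) : nat) m.

Lemma cut_mnm_coord i E b :
  cut_mnm i (if b then lshift (ne e) (enum_rank E) else rshift (ne e) (enum_rank E)) =
  (in_cut (enum_val i) E == b).
Proof.
have shift_eq (b1 b2 : bool) (x y : 'I_(ne e)) :
    ((if b1 then lshift (ne e) x else rshift (ne e) x) ==
     (if b2 then lshift (ne e) y else rshift (ne e) y)) = (b1 == b2) && (x == y).
  case: b1 b2 => [] [] /=; rewrite ?(inj_eq (@lshift_inj _ _)) ?(inj_eq (@rshift_inj _ _)) //.
    by apply/negbTE/eqP => /(congr1 val) /=; have := ltn_ord x; lia.
  by apply/negbTE/eqP => /(congr1 val) /=; have := ltn_ord y; lia.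
rewrite /cut_mnm mnm_sumE (bigD1 E) //= big1 ?addn0 => [|E' ne_E'E].
  by rewrite mnm1E shift_eq eqxx andbT.
by rewrite mnm1E shift_eq (inj_eq enum_rank_inj) (negbTE ne_E'E) andbF.
Qed.

Lemma monomap_cut_coord m E b :
  monomap cut_mnm m (if b then lshift (ne e) (enum_rank E)
                     else rshift (ne e) (enum_rank E)) = cut_count m E b.
Proof.
rewrite /monomap mnm_sumE /cut_count /mweight; apply: eq_bigr => i _.
by rewrite mulmnE cut_mnm_coord mulnC.
Qed.

Lemma monomap_cut_eq m m' :
  monomap cut_mnm m = monomap cut_mnm m' <-> forall E b, cut_count m E b = cut_count m' E b.
Proof.
split=> [mm' E b|counts]; first by rewrite -!monomap_cut_coord mm'.
apply/mnmP => j; rewrite -(splitK j); case: (split j) => x /=; rewrite -(enum_valK x).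
  by rewrite (monomap_cut_coord m _ true) (monomap_cut_coord m' _ true) counts.
by rewrite (monomap_cut_coord m _ false) (monomap_cut_coord m' _ false) counts.
Qed.

Lemma cut_count_mdeg m E : (cut_count m E true + cut_count m E false)%N = mdeg m.
Proof.
rewrite /cut_count /mweight -big_split mdegE /=; apply: eq_bigr => i _.
by case: in_cut; rewrite /= ?muln1 ?muln0 ?addn0.
Qed.

Lemma monomap_cut_mdeg m m' : (0 < ne e)%N ->
  monomap cut_mnm m = monomap cut_mnm m' -> mdeg m = mdeg m'.
Proof.
move=> ne_gt0 /monomap_cut_eq counts; pose E := enum_val (Ordinal ne_gt0).
by rewrite -!(cut_count_mdeg _ E) !counts.
Qed.

Lemma monomap_cut_const m m' : ne e = 0%N -> monomap cut_mnm m = monomap cut_mnm m'.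
Proof. by move=> ne0; apply/monomap_cut_eq => E; have := card0_eq ne0 E; rewrite !inE. Qed.

Lemma cut_sqfree_moves_homog le : monomial_order le -> sqfree_moves (monomap cut_mnm) le ->
  exists le', monomial_order le' /\
    sqfree_moves (fun x => (monomap cut_mnm x, mdeg x)) le'.
Proof.
move=> le_mo moves; have [ne0|ne_gt0] := posnP (ne e).
  exists (@deg_order (nq V)); split; first exact: monomial_order_deg.
  apply: eq_sqfree_moves (sqfree_moves_mdeg (nq_gt0 V)) => x y.
  by split=> [->|[]//]; rewrite (monomap_cut_const x y ne0).
exists le; split=> //; apply: eq_sqfree_moves moves => x y.
by split=> [xy|[]//]; rewrite xy (monomap_cut_mdeg ne_gt0 xy).
Qed.

Lemma cut_sqfree_moves_of_homog le : monomial_order le ->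
  sqfree_moves (fun x => (monomap cut_mnm x, mdeg x)) le ->
  sqfree_moves (monomap cut_mnm) le.
Proof.
move=> le_mo moves; have [ne0|ne_gt0] := posnP (ne e).
  apply: eq_sqfree_moves (sqfree_moves_const (t := tt) le_mo) => x y.
  by split=> // _; apply: monomap_cut_const.
apply: eq_sqfree_moves moves => x y.
by split=> [[]//|xy]; rewrite xy (monomap_cut_mdeg ne_gt0 xy).
Qed.

End CutMonomials.

Section EdgeImage.
Variables (V' V : finType) (f : V' -> V) (e' : rel V') (e : rel V).
Hypothesis f_edge : forall x y, e' x y = e (f x) (f y).

Lemma is_edge_imset (E : edge e') : is_edge e (f @: val E).
Proof.
case: E => E /= /existsP[i /existsP[j /andP[eij /eqP ->]]].
apply/existsP; exists (f i); apply/existsP; exists (f j).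
by rewrite -f_edge eij imsetU1 imset_set1 eqxx.
Qed.

Definition edge_imset (E : edge e') : edge e := exist _ (f @: val E) (is_edge_imset E).

Definition upart_restr (P : upart V) : upart V' := upart_of (f @^-1: upart_rep P).

Lemma upart_restr_of A : upart_restr (upart_of A) = upart_of (f @^-1: A).
Proof.
by rewrite /upart_restr; case: (upart_rep_of A) => ->; rewrite ?preimsetC ?upart_ofC.
Qed.

Lemma separates_imset A (E : {set V'}) : separates A (f @: E) = separates (f @^-1: A) E.
Proof.
apply/existsP/existsP => [[_ /andP[/imsetP[i iE ->] /existsP[_ /andP[/imsetP[j jE ->] ij]]]]|].
  by exists i; rewrite iE; apply/existsP; exists j; rewrite jE !inE.
case=> i /andP[iE /existsP[j /andP[jE ij]]]; exists (f i); rewrite imset_f //.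
by apply/existsP; exists (f j); rewrite imset_f //; move: ij; rewrite !inE.
Qed.

Lemma in_cut_imset P E : in_cut P (edge_imset E) = in_cut (upart_restr P) E.
Proof.
by rewrite (in_cutE _ (upart_repE P)) (@in_cutE _ _ _ E (f @^-1: upart_rep P)) // separates_imset.
Qed.

Definition restr_index (i : 'I_(nq V)) : 'I_(nq V') :=
  enum_rank (upart_restr (enum_val i)).

Lemma cut_count_imset m E b :
  cut_count m (edge_imset E) b = cut_count (push restr_index m) E b.
Proof.
rewrite /cut_count -mweight_push /mweight; apply: eq_bigr => i _ /=.
by rewrite in_cut_imset enum_rankK.
Qed.

End EdgeImage.

Section DisjointUnion.
Variables (V1 V2 : finType) (e1 : rel V1) (e2 : rel V2).
Local Notation G := (disj_union e1 e2).

Lemma disj_union_inl x y : e1 x y = G (inl x) (inl y). Proof. by []. Qed.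
Lemma disj_union_inr x y : e2 x y = G (inr x) (inr y). Proof. by []. Qed.

Lemma edge_disj_union (E : edge G) :
  (exists E1, E = edge_imset disj_union_inl E1) \/
  (exists E2, E = edge_imset disj_union_inr E2).
Proof.
case: E => E EG; have /existsP[x /existsP[y /andP[exy /eqP EE]]] := EG.
case: x y exy EE => [i|i] [j|j] //= eij EE.
  have E1 : is_edge e1 [set i; j] by apply/existsP; exists i; apply/existsP; exists j; rewrite eij eqxx.
  left; exists (exist _ [set i; j] E1); apply/val_inj; by rewrite /= EE imsetU1 imset_set1.
have E2 : is_edge e2 [set i; j] by apply/existsP; exists i; apply/existsP; exists j; rewrite eij eqxx.
right; exists (exist _ [set i; j] E2); apply/val_inj; by rewrite /= EE imsetU1 imset_set1.
Qed.

Definition upart_glue (P1 : upart V1) (P2 : upart V2) : upart (V1 + V2)%type :=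
  upart_of (inl @: upart_rep P1 :|: inr @: upart_rep P2).

Lemma upart_restr_glue1 P1 P2 : upart_restr inl (upart_glue P1 P2) = P1.
Proof.
rewrite upart_restr_of -[RHS]upart_of_rep; congr upart_of; apply/setP => x.
rewrite !inE (mem_imset _ _ (@inl_inj _ _)).
by case: (x \in _) => //=; apply/negbTE/imsetP => -[].
Qed.

Lemma upart_restr_glue2 P1 P2 : upart_restr inr (upart_glue P1 P2) = P2.
Proof.
rewrite upart_restr_of -[RHS]upart_of_rep; congr upart_of; apply/setP => x.
rewrite !inE (mem_imset _ _ (@inr_inj _ _)) orbC.
by case: (x \in _) => //=; apply/negbTE/imsetP => -[].
Qed.

Definition glue_index (a : 'I_(nq V1)) (b : 'I_(nq V2)) : 'I_(nq (V1 + V2)%type) :=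
  enum_rank (upart_glue (enum_val a) (enum_val b)).

Lemma restr_glue_index1 a b : restr_index inl (glue_index a b) = a.
Proof. by rewrite /restr_index enum_rankK upart_restr_glue1 enum_valK. Qed.

Lemma restr_glue_index2 a b : restr_index inr (glue_index a b) = b.
Proof. by rewrite /restr_index enum_rankK upart_restr_glue2 enum_valK. Qed.

Lemma monomap_union_eq m m' :
  monomap (cut_mnm G) m = monomap (cut_mnm G) m' <->
  monomap (cut_mnm e1) (push (restr_index inl) m) =
    monomap (cut_mnm e1) (push (restr_index inl) m') /\
  monomap (cut_mnm e2) (push (restr_index inr) m) =
    monomap (cut_mnm e2) (push (restr_index inr) m').
Proof.
rewrite !monomap_cut_eq; split=> [mm'|[mm'1 mm'2] E b].
  by split=> E b; rewrite -?(cut_count_imset disj_union_inl) -?(cut_count_imset disj_union_inr) mm'.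
by case: (edge_disj_union E) => -[E' ->]; rewrite !cut_count_imset ?mm'1 ?mm'2.
Qed.

Local Notation homog_cut e := (fun x => (monomap (cut_mnm e) x, mdeg x)).

Lemma union_sqfree_moves le1 le2 :
  monomial_order le1 -> sqfree_moves (homog_cut e1) le1 ->
  monomial_order le2 -> sqfree_moves (homog_cut e2) le2 ->
  exists le, monomial_order le /\ sqfree_moves (monomap (cut_mnm G)) le.
Proof.
move=> mo1 moves1 mo2 moves2.
have mo := monomial_order_tfp (restr_index inl) (restr_index inr) glue_index mo1 mo2.
exists (tfp_order (restr_index inl) (restr_index inr) glue_index le1 le2).
split=> //; apply: cut_sqfree_moves_of_homog mo _.
have homog1 x y : homog_cut e1 x = homog_cut e1 y -> mdeg x = mdeg y by case.
have homog2 x y : homog_cut e2 x = homog_cut e2 y -> mdeg x = mdeg y by case.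
apply: eq_sqfree_moves (sqfree_moves_tfp restr_glue_index1 restr_glue_index2
  homog1 homog2 moves1 moves2) => x y.
rewrite /tfp_fiber; split=> [[Ex1 Dxy Ex2 _]|[/monomap_union_eq[Ex1 Ex2] Dxy]].
  rewrite -(mdeg_push (restr_index inl) x) Dxy mdeg_push.
  by rewrite (proj2 (monomap_union_eq x y) (conj Ex1 Ex2)).
by rewrite Ex1 Ex2 !mdeg_push Dxy.
Qed.

End DisjointUnion.

Theorem corollary5p3 (K : fieldType) (V1 V2 : finType)
  (e1 : rel V1) (e2 : rel V2) :
  simple_graph e1 -> simple_graph e2 ->
  has_sqfree_gb (cut_ideal K e1) ->
  has_sqfree_gb (cut_ideal K e2) ->
  has_sqfree_gb (cut_ideal K (disj_union e1 e2)).
Proof.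
move=> _ _ /(sqfree_moves_of_gb (@phi_varE _ e1 K)) [L1 [mo1 moves1]].
move=> /(sqfree_moves_of_gb (@phi_varE _ e2 K)) [L2 [mo2 moves2]].
have [A1 [moA1 movesA1]] := cut_sqfree_moves_homog mo1 moves1.
have [A2 [moA2 movesA2]] := cut_sqfree_moves_homog mo2 moves2.
have [le [mo moves]] := union_sqfree_moves moA1 movesA1 moA2 movesA2.
exact (gb_of_sqfree_moves (@phi_varE _ (disj_union e1 e2) K) mo moves).
Qed.
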